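(* Let $U\subseteq\mathbb{R}^3_{a,b,w}$ be a neighborhood of $0$, let $f(a,b,w)$ be a homogeneous polynomial of degree $k$, and let $\mathcal{L}'$ be a differential operator such that $\mathcal{L}'(\mathcal{W}^1(U))\subseteq\mathcal{W}^1(U)$. Then there exist $u,v'\in\mathcal{W}^1(U)$ such that $$(\Delta_{\mathbb{R}^3}+\mathcal{L}')u=\frac{f}{r_w^{k+1}}+v'.$$
   Context: $r_w(a,b,w)=\sqrt{a^2+b^2+w^2}$. For $\ell\in\mathbb{N}$, $\mathcal{W}^\ell(U)$ is the set of $f\in C^\infty(U\setminus\{0\})$ such that $\nabla^jf=\mathcal{O}(r_w^{\ell-j}\log r_w)$ as $r_w\to0$ for all $j\geq0$. $\Delta_{\mathbb{R}^3}$ is the Euclidean Laplacian. *)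

From Stdlib Require Import Reals List.
From Coquelicot Require Import Coquelicot.
Import ListNotations.
Open Scope R_scope.

Definition pt : Type := (R * R * R)%type.

Definition origin : pt := (0, 0, 0).

Definition rw (p : pt) : R :=
  let '(a, b, w) := p in sqrt (a ^ 2 + b ^ 2 + w ^ 2).

Inductive coord : Type := CA | CB | CW.

Definition shift (i : coord) (t : R) (p : pt) : pt :=
  let '(a, b, w) := p in
  match i with
  | CA => (a + t, b, w)
  | CB => (a, b + t, w)
  | CW => (a, b, w + t)
  end.

Definition pd (i : coord) (f : pt -> R) : pt -> R :=
  fun p => Derive (fun t => f (shift i t p)) 0.

Fixpoint pds (l : list coord) (f : pt -> R) : pt -> R :=
  match l with
  | nil => f
  | i :: l' => pd i (pds l' f)
  end.

Definition punct (U : pt -> Prop) (p : pt) : Prop := U p /\ p <> origin.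

Definition smooth_on (D : pt -> Prop) (f : pt -> R) : Prop :=
  forall (l : list coord) (p : pt), D p ->
    continuous (pds l f) p /\
    forall i : coord, ex_derive (fun t => pds l f (shift i t p)) 0.

(* W^l(U): smooth on U\{0}, and nabla^j f = O(r_w^(l-j) log r_w) as r_w -> 0,
   for every j (expressed componentwise via all iterated partials of order j). *)
Definition W (l : nat) (U : pt -> Prop) (f : pt -> R) : Prop :=
  smooth_on (punct U) f /\
  forall ls : list coord,
    exists C delta : R, 0 < delta /\
      forall p : pt, punct U p -> rw p < delta ->
        Rabs (pds ls f p) <=
          C * powerRZ (rw p) (Z.of_nat l - Z.of_nat (length ls))%Z * Rabs (ln (rw p)).

Definition lap (u : pt -> R) : pt -> R :=
  fun p => pds [CA; CA] u p + pds [CB; CB] u p + pds [CW; CW] u p.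

(* A (linear) differential operator: finite sum of coefficient functions times
   iterated partial derivatives, sum_alpha c_alpha(p) * (d^alpha u)(p). *)
Definition diff_op : Type := list (list coord * (pt -> R)).

Definition apply_op (L : diff_op) (u : pt -> R) : pt -> R :=
  fun p => fold_right (fun lc acc => acc + snd lc p * pds (fst lc) u p) 0 L.

Definition hom_poly (k : nat) (f : pt -> R) : Prop :=
  exists c : nat -> nat -> R, forall a b w : R,
    f (a, b, w) =
      sum_f_R0 (fun i =>
        sum_f_R0 (fun j => c i j * a ^ i * b ^ j * w ^ (k - i - j)) (k - i)) k.

(* Put v' := L' u; it then suffices to find u in W^1 with
   Δu = f / r^(k+1), where r = r_w.  For P homogeneous of degree k and real m,
     Δ(P r^m) = (ΔP) r^m + m (2k + m + 1) P r^(m-2)          (Euler's identity),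
   so with m = 1 - k and c = (1 - k)(k + 2) the function P r^(1-k) / c solves the
   equation up to the error (ΔP) r^(1-k) / c, a term of the same shape with k
   replaced by k - 2; induction on k removes it, the error vanishing for k = 0.
   For k = 1 the coefficient c vanishes and P ln r / 3 is used instead.
   Every function produced is a sum of products of coordinates, real powers of r
   and ln r; such functions are represented by syntax trees, on which partial
   derivatives and the bound ∇^j u = O(r^(1-j) |ln r|) are computed by recursion. *)

From Stdlib Require Import Reals List Lra Lia.
From Coquelicot Require Import Coquelicot.
Import ListNotations.
Open Scope R_scope.

Definition proj (i : coord) (p : pt) : R :=
  let '(a, b, w) := p in match i with CA => a | CB => b | CW => w end.

Definition sqnorm (p : pt) : R :=
  proj CA p * proj CA p + proj CB p * proj CB p + proj CW p * proj CW p.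

Definition ceq (i j : coord) : bool :=
  match i, j with CA, CA | CB, CB | CW, CW => true | _, _ => false end.

Lemma rw_sqnorm p : rw p = sqrt (sqnorm p).
Proof. destruct p as [[a b] w]; unfold rw, sqnorm; simpl; f_equal; ring. Qed.

Lemma sqnorm_pos p : p <> origin -> 0 < sqnorm p.
Proof.
  destruct p as [[a b] w]; unfold sqnorm; simpl; intros Hp.
  destruct (Req_dec a 0), (Req_dec b 0), (Req_dec w 0); subst;
    try (exfalso; apply Hp; reflexivity); nra.
Qed.

Lemma rw_pos p : p <> origin -> 0 < rw p.
Proof. intros Hp; rewrite rw_sqnorm; apply sqrt_lt_R0, sqnorm_pos, Hp. Qed.

Lemma rw_sqr q : rw q ^ 2 = sqnorm q.
Proof.
  rewrite rw_sqnorm, <- Rsqr_pow2, Rsqr_sqrt; [reflexivity |].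
  unfold sqnorm; nra.
Qed.

Lemma proj_le_rw i q : Rabs (proj i q) <= rw q.
Proof.
  rewrite rw_sqnorm, <- sqrt_Rsqr_abs. apply sqrt_le_1_alt.
  unfold sqnorm, Rsqr. destruct i; nra.
Qed.

Lemma proj_shift i j t q :
  proj j (shift i t q) = proj j q + (if ceq i j then t else 0).
Proof. destruct q as [[a b] w]; destruct i, j; simpl; ring. Qed.

Lemma sqnorm_shift i t q : sqnorm (shift i t q) = sqnorm q + 2 * t * proj i q + t ^ 2.
Proof. destruct q as [[a b] w]; destruct i; unfold sqnorm; simpl; ring. Qed.

Lemma shift0 i q : shift i 0 q = q.
Proof. destruct q as [[a b] w]; destruct i; simpl; rewrite Rplus_0_r; reflexivity. Qed.

Lemma Rpower_sub2 r m : 0 < r -> Rpower r m = Rpower r (m - 2) * r ^ 2.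
Proof.
  intros Hr. unfold Rminus.
  rewrite Rpower_plus, Rpower_Ropp, (Rpower_pow 2) by exact Hr.
  field. lra.
Qed.

(** * Closed-form functions and their partial derivatives *)

Arguments shift : simpl never.

Lemma is_derive_Rpower_rw i q m : q <> origin ->
  is_derive (fun t => Rpower (rw (shift i t q)) m) 0
    (m * proj i q * Rpower (rw q) (m - 2)).
Proof.
  intros Hq. pose proof (sqnorm_pos q Hq) as HQ.
  apply (is_derive_ext (fun t => exp (m * ln (sqrt (sqnorm q + 2 * t * proj i q + t ^ 2))))).
  { intros t; rewrite rw_sqnorm, sqnorm_shift; reflexivity. }
  auto_derive.
  - repeat split; try easy. simpl; lra. rewrite Rmult_0_l, Rplus_0_r; apply sqrt_lt_R0; simpl; lra.
  - replace (sqnorm q + 2 * 0 * proj i q + 0 * (0 * 1)) with (sqnorm q) by ring.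
    rewrite <- rw_sqnorm. pose proof (rw_pos q Hq).
    change (exp (m * ln (rw q))) with (Rpower (rw q) m).
    rewrite (Rpower_sub2 (rw q) m) by lra. field. lra.
Qed.

Lemma is_derive_ln_rw i q : q <> origin ->
  is_derive (fun t => ln (rw (shift i t q))) 0 (proj i q * Rpower (rw q) (-2)).
Proof.
  intros Hq. pose proof (sqnorm_pos q Hq) as HQ.
  apply (is_derive_ext (fun t => ln (sqrt (sqnorm q + 2 * t * proj i q + t ^ 2)))).
  { intros t; rewrite rw_sqnorm, sqnorm_shift; reflexivity. }
  auto_derive.
  - repeat split; try easy. simpl; lra. rewrite Rmult_0_l, Rplus_0_r; apply sqrt_lt_R0; simpl; lra.
  - replace (sqnorm q + 2 * 0 * proj i q + 0 * (0 * 1)) with (sqnorm q) by ring.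
    rewrite <- rw_sqnorm. pose proof (rw_pos q Hq).
    replace (-2) with (- (2)) by ring.
    rewrite Rpower_Ropp, (Rpower_pow 2) by lra. field. lra.
Qed.

Inductive expr :=
| EC (c : R)
| EX (i : coord)
| ER (m : R)
| EL
| EAdd (e1 e2 : expr)
| EMul (e1 e2 : expr).

Fixpoint ev (e : expr) (p : pt) : R :=
  match e with
  | EC c => c
  | EX i => proj i p
  | ER m => Rpower (rw p) m
  | EL => ln (rw p)
  | EAdd e1 e2 => ev e1 p + ev e2 p
  | EMul e1 e2 => ev e1 p * ev e2 p
  end.

Fixpoint dv (i : coord) (e : expr) : expr :=
  match e with
  | EC _ => EC 0
  | EX j => EC (if ceq i j then 1 else 0)
  | ER m => EMul (EC m) (EMul (EX i) (ER (m - 2)))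
  | EL => EMul (EX i) (ER (-2))
  | EAdd e1 e2 => EAdd (dv i e1) (dv i e2)
  | EMul e1 e2 => EAdd (EMul (dv i e1) e2) (EMul e1 (dv i e2))
  end.

Fixpoint dvs (l : list coord) (e : expr) : expr :=
  match l with [] => e | i :: l' => dv i (dvs l' e) end.

Lemma is_derive_ev e i q : q <> origin ->
  is_derive (fun t => ev e (shift i t q)) 0 (ev (dv i e) q).
Proof.
  intros Hq. induction e as [c | j | m | | e1 IH1 e2 IH2 | e1 IH1 e2 IH2]; simpl.
  - auto_derive; easy.
  - apply (is_derive_ext (fun t => proj j q + (if ceq i j then t else 0))).
    { intros t; rewrite proj_shift; reflexivity. }
    destruct (ceq i j); auto_derive; easy || ring.
  - replace (m * (proj i q * Rpower (rw q) (m - 2)))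
      with (m * proj i q * Rpower (rw q) (m - 2)) by ring.
    apply is_derive_Rpower_rw, Hq.
  - apply is_derive_ln_rw, Hq.
  - apply (is_derive_plus _ _ _ _ _ IH1 IH2).
  - pose proof (is_derive_mult _ _ _ _ _ IH1 IH2 Rmult_comm) as H.
    unfold plus, mult in H; simpl in H. rewrite !shift0 in H. exact H.
Qed.

Lemma sqnorm_origin : sqnorm origin = 0.
Proof. unfold sqnorm, origin, proj; ring. Qed.

Lemma near_shift_neq_origin i q : q <> origin -> locally 0 (fun t => shift i t q <> origin).
Proof.
  intros Hq. exists (mkposreal _ (rw_pos q Hq)). intros t Ht Heq.
  change (Rabs (t - 0) < rw q) in Ht. rewrite Rminus_0_r in Ht.
  assert (H0 : sqnorm (shift i t q) = 0) by (rewrite Heq; apply sqnorm_origin).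
  rewrite sqnorm_shift, <- rw_sqr in H0.
  pose proof (proj_le_rw i q) as Hx.
  apply Rabs_def2 in Ht. apply Rabs_le_between in Hx.
  destruct (Rle_lt_dec 0 t); nra.
Qed.

Lemma continuous_proj i q : continuous (proj i) q.
Proof.
  destruct i.
  - apply (continuous_ext (fun p : pt => fst (fst p))).
    { intros [[a b] w]; reflexivity. }
    apply (continuous_comp fst fst); apply continuous_fst.
  - apply (continuous_ext (fun p : pt => snd (fst p))).
    { intros [[a b] w]; reflexivity. }
    apply (continuous_comp fst snd); [apply continuous_fst | apply continuous_snd].
  - apply (continuous_ext (fun p : pt => snd p)).
    { intros [[a b] w]; reflexivity. }
    apply continuous_snd.
Qed.

Lemma continuous_rw q : continuous rw q.
Proof.
  apply (continuous_ext (fun p => sqrt (sqnorm p))).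
  { intros p; symmetry; apply rw_sqnorm. }
  apply (continuous_comp sqnorm sqrt); [| apply continuous_sqrt].
  unfold sqnorm.
  repeat apply (continuous_plus (V := R_NormedModule));
    apply (continuous_mult (K := R_AbsRing)); apply continuous_proj.
Qed.

Lemma near_neq_origin p : p <> origin -> locally p (fun y => y <> origin).
Proof.
  intros Hp.
  assert (Hpos : locally (rw p) (fun z => 0 < z)).
  { exists (mkposreal _ (rw_pos p Hp)). intros z Hz.
    change (Rabs (z - rw p) < rw p) in Hz. apply Rabs_def2 in Hz. lra. }
  apply (filter_imp (fun y => 0 < rw y)); [| exact (continuous_rw p _ Hpos)].
  intros y Hy ->. rewrite rw_sqnorm, sqnorm_origin, sqrt_0 in Hy. lra.
Qed.

Lemma continuous_ev e q : q <> origin -> continuous (ev e) q.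
Proof.
  intros Hq.
  assert (Hln : continuous (fun p => ln (rw p)) q).
  { apply (continuous_comp rw ln); [apply continuous_rw |].
    apply continuous_ln, rw_pos, Hq. }
  induction e; simpl.
  - apply continuous_const.
  - apply continuous_proj.
  - apply (continuous_comp (fun p => m * ln (rw p)) exp); [| apply continuous_exp].
    apply (continuous_mult (K := R_AbsRing)); [apply continuous_const | exact Hln].
  - exact Hln.
  - apply (continuous_plus (V := R_NormedModule)); assumption.
  - apply (continuous_mult (K := R_AbsRing)); assumption.
Qed.

Lemma pds_ev l e q : q <> origin -> pds l (ev e) q = ev (dvs l e) q.
Proof.
  revert q. induction l as [|i l IH]; intros q Hq; simpl; [reflexivity |].
  unfold pd. rewrite (Derive_ext_loc _ (fun t => ev (dvs l e) (shift i t q))).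
  - apply is_derive_unique, is_derive_ev, Hq.
  - apply (filter_imp (fun t => shift i t q <> origin)); [| apply near_shift_neq_origin, Hq].
    intros t Ht. apply IH, Ht.
Qed.

Lemma smooth_on_ev U e : smooth_on (punct U) (ev e).
Proof.
  intros l p [_ Hp]. split.
  - apply (continuous_ext_loc _ (ev (dvs l e))); [| apply continuous_ev, Hp].
    apply (filter_imp (fun y => y <> origin)); [| apply near_neq_origin, Hp].
    intros y Hy. symmetry. apply pds_ev, Hy.
  - intros i. exists (ev (dv i (dvs l e)) p).
    apply (is_derive_ext_loc (fun t => ev (dvs l e) (shift i t p))); [| apply is_derive_ev, Hp].
    apply (filter_imp (fun t => shift i t p <> origin)); [| apply near_shift_neq_origin, Hp].
    intros t Ht. symmetry. apply pds_ev, Ht.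
Qed.

(** * Growth at the origin *)

Fixpoint ord0 (e : expr) : R :=
  match e with
  | EC _ | EL => 0
  | EX _ => 1
  | ER m => m
  | EAdd e1 e2 => Rmin (ord0 e1) (ord0 e2)
  | EMul e1 e2 => ord0 e1 + ord0 e2
  end.

Fixpoint logpow (e : expr) : nat :=
  match e with
  | EC _ | EX _ | ER _ => 0
  | EL => 1
  | EAdd e1 e2 => Nat.max (logpow e1) (logpow e2)
  | EMul e1 e2 => logpow e1 + logpow e2
  end.

Lemma ord0_logpow_dv i e :
  ord0 e - 1 <= ord0 (dv i e) /\ (logpow (dv i e) <= logpow e)%nat.
Proof.
  induction e as [| | | | e1 [H1 L1] e2 [H2 L2] | e1 [H1 L1] e2 [H2 L2]]; simpl;
    (split; [| lia]); try lra.
  - pose proof (Rmin_l (ord0 e1) (ord0 e2)); pose proof (Rmin_r (ord0 e1) (ord0 e2)).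
    apply Rmin_glb; lra.
  - apply Rmin_glb; lra.
Qed.

Lemma ord0_logpow_dvs l e :
  ord0 e - INR (length l) <= ord0 (dvs l e) /\ (logpow (dvs l e) <= logpow e)%nat.
Proof.
  induction l as [|i l [H L]]; simpl dvs; [simpl; split; [lra | lia] |].
  destruct (ord0_logpow_dv i (dvs l e)).
  change (length (i :: l)) with (S (length l)). rewrite S_INR. split; [lra | lia].
Qed.

Definition bounded_by (e : expr) (d : R) (n : nat) : Prop :=
  exists C, 0 <= C /\ forall q, q <> origin -> rw q < 1 ->
    Rabs (ev e q) <= C * Rpower (rw q) d * (1 + Rabs (ln (rw q))) ^ n.

Lemma Rpower_le_small r d d' : 0 < r -> r < 1 -> d' <= d -> Rpower r d <= Rpower r d'.
Proof.
  intros H0 H1 [Hd | ->]; [| lra].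
  assert (ln r < 0) by (rewrite <- ln_1; apply ln_increasing; lra).
  left. apply exp_increasing. nra.
Qed.

Lemma bounded_by_weaken e d n d' n' :
  bounded_by e d n -> d' <= d -> (n <= n')%nat -> bounded_by e d' n'.
Proof.
  intros [C [HC H]] Hd Hn. exists C. split; [exact HC |].
  intros q Hq Hr. pose proof (rw_pos q Hq).
  assert (Hlog : 1 <= 1 + Rabs (ln (rw q))) by (pose proof (Rabs_pos (ln (rw q))); lra).
  eapply Rle_trans; [apply H; assumption |].
  apply Rmult_le_compat.
  - pose proof (exp_pos (d * ln (rw q))). unfold Rpower. nra.
  - apply pow_le; lra.
  - apply Rmult_le_compat_l; [exact HC | apply Rpower_le_small; assumption].
  - apply Rle_pow; assumption.
Qed.

Lemma bounded_by_ev e : bounded_by e (ord0 e) (logpow e).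
Proof.
  induction e as [c | i | m | | e1 IH1 e2 IH2 | e1 [C1 [HC1 H1]] e2 [C2 [HC2 H2]]];
    simpl ord0; simpl logpow; unfold bounded_by; simpl ev.
  - exists (Rabs c). split; [apply Rabs_pos |]. intros q Hq _.
    rewrite Rpower_O by (apply rw_pos, Hq). simpl. lra.
  - exists 1. split; [lra |]. intros q Hq _.
    rewrite Rpower_1 by (apply rw_pos, Hq). simpl. rewrite Rmult_1_r, Rmult_1_l.
    apply proj_le_rw.
  - exists 1. split; [lra |]. intros q Hq _.
    rewrite Rabs_pos_eq by (left; apply exp_pos). simpl. lra.
  - exists 1. split; [lra |]. intros q Hq _.
    rewrite Rpower_O by (apply rw_pos, Hq). simpl. lra.
  - destruct (bounded_by_weaken _ _ _ (Rmin (ord0 e1) (ord0 e2))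
                (Nat.max (logpow e1) (logpow e2)) IH1) as [C1 [HC1 H1]];
      [apply Rmin_l | lia |].
    destruct (bounded_by_weaken _ _ _ (Rmin (ord0 e1) (ord0 e2))
                (Nat.max (logpow e1) (logpow e2)) IH2) as [C2 [HC2 H2]];
      [apply Rmin_r | lia |].
    exists (C1 + C2). split; [lra |]. intros q Hq Hr.
    specialize (H1 q Hq Hr). specialize (H2 q Hq Hr).
    eapply Rle_trans; [apply Rabs_triang |]. rewrite !Rmult_plus_distr_r. lra.
  - exists (C1 * C2). split; [nra |]. intros q Hq Hr.
    specialize (H1 q Hq Hr). specialize (H2 q Hq Hr).
    rewrite Rabs_mult, Rpower_plus, pow_add.
    replace (C1 * C2 * (Rpower (rw q) (ord0 e1) * Rpower (rw q) (ord0 e2)) *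
       ((1 + Rabs (ln (rw q))) ^ logpow e1 * (1 + Rabs (ln (rw q))) ^ logpow e2))
      with ((C1 * Rpower (rw q) (ord0 e1) * (1 + Rabs (ln (rw q))) ^ logpow e1) *
            (C2 * Rpower (rw q) (ord0 e2) * (1 + Rabs (ln (rw q))) ^ logpow e2)) by ring.
    apply Rmult_le_compat; auto using Rabs_pos.
Qed.

Lemma W1_ev U e : 1 <= ord0 e -> (logpow e <= 1)%nat -> W 1 U (ev e).
Proof.
  intros Hord Hlog. split; [apply smooth_on_ev |].
  intros ls. destruct (ord0_logpow_dvs ls e) as [Hd Hl].
  destruct (bounded_by_weaken _ _ _ (1 - INR (length ls)) 1 (bounded_by_ev (dvs ls e)))
    as [C [HC H]]; [lra | lia |].
  exists (2 * C), (exp (-1)). split; [apply exp_pos |].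
  intros p [_ Hp] Hr. pose proof (rw_pos p Hp).
  assert (Hln : ln (rw p) < -1) by (rewrite <- (ln_exp (-1)); apply ln_increasing; assumption).
  assert (Hr1 : rw p < 1) by (pose proof (exp_increasing (-1) 0); rewrite exp_0 in *; lra).
  rewrite pds_ev by exact Hp.
  eapply Rle_trans; [apply H; assumption |].
  rewrite powerRZ_Rpower, minus_IZR, <- !INR_IZR_INZ by assumption.
  rewrite Rabs_left, pow_1 by lra. simpl (INR 1).
  assert (0 <= C * Rpower (rw p) (1 - INR (length ls)))
    by (apply Rmult_le_pos; [exact HC | left; apply exp_pos]).
  nra.
Qed.

(** * Homogeneity and the Laplacian *)

Inductive homog : expr -> Z -> Prop :=
| homog_C c : homog (EC c) 0
(* zero has every degree, so that derivatives of constants stay homogeneous *)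
| homog_0 d : homog (EC 0) d
| homog_X i : homog (EX i) 1
| homog_add e1 e2 d : homog e1 d -> homog e2 d -> homog (EAdd e1 e2) d
| homog_mul e1 e2 d1 d2 : homog e1 d1 -> homog e2 d2 -> homog (EMul e1 e2) (d1 + d2).

Lemma homog_dv i e d : homog e d -> homog (dv i e) (d - 1).
Proof.
  induction 1 as [c | d | j | e1 e2 d _ IH1 _ IH2 | e1 e2 d1 d2 H1 IH1 H2 IH2]; simpl.
  - constructor.
  - constructor.
  - destruct (ceq i j); constructor.
  - constructor; assumption.
  - constructor.
    + replace (d1 + d2 - 1)%Z with (d1 - 1 + d2)%Z by lia. constructor; assumption.
    + replace (d1 + d2 - 1)%Z with (d1 + (d2 - 1))%Z by lia. constructor; assumption.
Qed.

Lemma homog_ev_neg e d q : homog e d -> (d < 0)%Z -> ev e q = 0.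
Proof.
  induction 1 as [c | d | j | e1 e2 d _ IH1 _ IH2 | e1 e2 d1 d2 _ IH1 _ IH2]; intros Hd; simpl;
    try lia; try reflexivity.
  - rewrite IH1, IH2 by exact Hd. ring.
  - destruct (Z.lt_ge_cases d1 0).
    + rewrite IH1 by assumption. ring.
    + rewrite IH2 by lia. ring.
Qed.

Definition radial_dv (e : expr) (q : pt) : R :=
  proj CA q * ev (dv CA e) q + proj CB q * ev (dv CB e) q + proj CW q * ev (dv CW e) q.

Lemma euler_homog e d q : homog e d -> radial_dv e q = IZR d * ev e q.
Proof.
  unfold radial_dv.
  induction 1 as [c | d | i | e1 e2 d _ IH1 _ IH2 | e1 e2 d1 d2 _ IH1 _ IH2]; simpl.
  - ring.
  - ring.
  - destruct i; simpl; ring.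
  - transitivity (IZR d * ev e1 q + IZR d * ev e2 q); [rewrite <- IH1, <- IH2 |]; ring.
  - rewrite plus_IZR.
    transitivity ((IZR d1 * ev e1 q) * ev e2 q + ev e1 q * (IZR d2 * ev e2 q));
      [rewrite <- IH1, <- IH2 | ]; ring.
Qed.

Definition lapX (e : expr) : expr :=
  EAdd (EAdd (dv CA (dv CA e)) (dv CB (dv CB e))) (dv CW (dv CW e)).

Lemma lap_ev e p : p <> origin -> lap (ev e) p = ev (lapX e) p.
Proof. intros Hp. unfold lap. rewrite !pds_ev by exact Hp. reflexivity. Qed.

Lemma homog_lapX e d : homog e d -> homog (lapX e) (d - 2).
Proof.
  intros H. replace (d - 2)%Z with (d - 1 - 1)%Z by lia.
  repeat constructor; repeat apply homog_dv; exact H.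
Qed.

Lemma ord0_logpow_lapX e : ord0 e - 2 <= ord0 (lapX e) /\ (logpow (lapX e) <= logpow e)%nat.
Proof.
  destruct (ord0_logpow_dvs [CA; CA] e), (ord0_logpow_dvs [CB; CB] e),
    (ord0_logpow_dvs [CW; CW] e).
  simpl in *. split; [repeat apply Rmin_glb; lra | lia].
Qed.

Definition grad_dot (e1 e2 : expr) (q : pt) : R :=
  ev (dv CA e1) q * ev (dv CA e2) q + ev (dv CB e1) q * ev (dv CB e2) q
  + ev (dv CW e1) q * ev (dv CW e2) q.

Lemma ev_lapX_mul e1 e2 q :
  ev (lapX (EMul e1 e2)) q =
  ev (lapX e1) q * ev e2 q + 2 * grad_dot e1 e2 q + ev e1 q * ev (lapX e2) q.
Proof. unfold lapX, grad_dot. simpl. ring. Qed.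

Lemma grad_dot_rpow e m q :
  grad_dot e (ER m) q = m * Rpower (rw q) (m - 2) * radial_dv e q.
Proof. unfold grad_dot, radial_dv. simpl. ring. Qed.

Lemma grad_dot_ln e q : grad_dot e EL q = Rpower (rw q) (-2) * radial_dv e q.
Proof. unfold grad_dot, radial_dv. simpl. ring. Qed.

Lemma lapX_rpow m q : q <> origin ->
  ev (lapX (ER m)) q = m * (m + 1) * Rpower (rw q) (m - 2).
Proof.
  intros Hq. unfold lapX. simpl.
  rewrite (Rpower_sub2 (rw q) (m - 2)), rw_sqr by (apply rw_pos, Hq).
  unfold sqnorm. ring.
Qed.

Lemma lapX_ln q : q <> origin -> ev (lapX EL) q = Rpower (rw q) (-2).
Proof.
  intros Hq. unfold lapX. simpl.
  rewrite (Rpower_sub2 (rw q) (-2)), rw_sqr by (apply rw_pos, Hq).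
  unfold sqnorm. ring.
Qed.

Lemma lapX_mul_rpow P d m q : homog P d -> q <> origin ->
  ev (lapX (EMul P (ER m))) q =
  ev (lapX P) q * Rpower (rw q) m + m * (2 * IZR d + m + 1) * ev P q * Rpower (rw q) (m - 2).
Proof.
  intros HP Hq.
  rewrite ev_lapX_mul, grad_dot_rpow, (euler_homog P d) by exact HP.
  rewrite lapX_rpow by exact Hq. simpl. ring.
Qed.

Lemma lapX_mul_ln P q : homog P 1 -> q <> origin ->
  ev (lapX (EMul P EL)) q = 3 * ev P q * Rpower (rw q) (-2).
Proof.
  intros HP Hq.
  rewrite ev_lapX_mul, grad_dot_ln, (euler_homog P 1), lapX_ln by assumption.
  rewrite (homog_ev_neg (lapX P) (1 - 2)) by (apply homog_lapX, HP || lia).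
  simpl. ring.
Qed.

(** * Inverting the Laplacian on homogeneous terms *)

Lemma ev_lapX_add e1 e2 q : ev (lapX (EAdd e1 e2)) q = ev (lapX e1) q + ev (lapX e2) q.
Proof. unfold lapX. simpl. ring. Qed.

Lemma ev_lapX_scale c e q : ev (lapX (EMul (EC c) e)) q = c * ev (lapX e) q.
Proof. unfold lapX. simpl. ring. Qed.

Definition hpoly (e : expr) (k : nat) : Prop :=
  homog e (Z.of_nat k) /\ INR k <= ord0 e /\ logpow e = 0%nat.

Lemma hpoly_C c : hpoly (EC c) 0.
Proof. split; [constructor | simpl; split; [lra | reflexivity]]. Qed.

Lemma hpoly_X i : hpoly (EX i) 1.
Proof. split; [constructor | simpl; split; [lra | reflexivity]]. Qed.

Lemma hpoly_add e1 e2 k : hpoly e1 k -> hpoly e2 k -> hpoly (EAdd e1 e2) k.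
Proof.
  intros [H1 [O1 L1]] [H2 [O2 L2]]. split; [constructor; assumption |].
  simpl. split; [apply Rmin_glb; assumption | lia].
Qed.

Lemma hpoly_mul e1 e2 k1 k2 k :
  hpoly e1 k1 -> hpoly e2 k2 -> k = (k1 + k2)%nat -> hpoly (EMul e1 e2) k.
Proof.
  intros [H1 [O1 L1]] [H2 [O2 L2]] ->. split.
  - replace (Z.of_nat (k1 + k2)) with (Z.of_nat k1 + Z.of_nat k2)%Z by lia.
    constructor; assumption.
  - simpl. rewrite plus_INR. split; [lra | lia].
Qed.

Lemma hpoly_lapX P k : hpoly P (S (S k)) -> hpoly (lapX P) k.
Proof.
  intros [HP [HO HL]]. destruct (ord0_logpow_lapX P). split; [| split].
  - replace (Z.of_nat k) with (Z.of_nat (S (S k)) - 2)%Z by lia. apply homog_lapX, HP.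
  - rewrite !S_INR in HO. lra.
  - lia.
Qed.

Lemma lapX_preimage k P : hpoly P k ->
  exists E, 1 <= ord0 E /\ (logpow E <= 1)%nat /\
    forall q, q <> origin -> ev (lapX E) q = ev P q * Rpower (rw q) (- (INR k + 1)).
Proof.
  revert P. induction k as [k IH] using Wf_nat.lt_wf_ind. intros P HPk.
  pose proof HPk as [HP [HO HL]].
  destruct (Nat.eq_dec k 1) as [-> | Hk1].
  - exists (EMul (EC (/ 3)) (EMul P EL)).
    split; [simpl in *; lra | split; [simpl in *; lia |]].
    intros q Hq. rewrite ev_lapX_scale, lapX_mul_ln by assumption.
    replace (- (INR 1 + 1)) with (-2) by (simpl; ring). field.
  - set (c := (1 - INR k) * (INR k + 2)).
    assert (Hc : c <> 0).
    { unfold c. pose proof (pos_INR k).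
      assert (INR k <> 1) by (intros Hk; apply Hk1, INR_eq; simpl; lra).
      apply Rmult_integral_contrapositive; split; lra. }
    set (E0 := EMul (EC (/ c)) (EMul P (ER (1 - INR k)))).
    assert (HE0 : forall q, q <> origin -> ev (lapX E0) q =
      / c * ev (lapX P) q * Rpower (rw q) (1 - INR k) + ev P q * Rpower (rw q) (- (INR k + 1))).
    { intros q Hq. unfold E0.
      rewrite ev_lapX_scale, (lapX_mul_rpow P (Z.of_nat k)), <- INR_IZR_INZ by assumption.
      replace (1 - INR k - 2) with (- (INR k + 1)) by ring.
      replace ((1 - INR k) * (2 * INR k + (1 - INR k) + 1)) with c by (unfold c; ring).
      field. exact Hc. }
    assert (HE0s : 1 <= ord0 E0 /\ (logpow E0 <= 1)%nat)
      by (unfold E0; simpl; split; [lra | lia]).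
    destruct k as [| [| k]]; [| contradiction |].
    + exists E0. split; [apply HE0s | split; [apply HE0s |]].
      intros q Hq.
      rewrite HE0, (homog_ev_neg (lapX P) (0 - 2)); [ring | apply homog_lapX, HP | lia | exact Hq].
    + destruct (IH k ltac:(lia) (lapX P) (hpoly_lapX P k HPk)) as [E1 [HO1 [HL1 HE1]]].
      exists (EAdd E0 (EMul (EC (- / c)) E1)). cbn [ord0 logpow].
      split; [apply Rmin_glb; lra | split; [lia |]].
      intros q Hq. rewrite ev_lapX_add, ev_lapX_scale, HE0, HE1 by exact Hq.
      replace (- (INR k + 1)) with (1 - INR (S (S k))) by (rewrite !S_INR; ring).
      field. exact Hc.
Qed.

(** * Homogeneous polynomials *)

Fixpoint powE (e : expr) (n : nat) : expr :=
  match n with O => EC 1 | S n => EMul e (powE e n) end.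

Fixpoint sumE (g : nat -> expr) (n : nat) : expr :=
  match n with O => g O | S n => EAdd (sumE g n) (g (S n)) end.

Lemma ev_powE e n q : ev (powE e n) q = ev e q ^ n.
Proof. induction n as [|n IH]; simpl; [| rewrite IH]; reflexivity. Qed.

Lemma ev_sumE g n q : ev (sumE g n) q = sum_f_R0 (fun i => ev (g i) q) n.
Proof. induction n as [|n IH]; simpl; [| rewrite IH]; reflexivity. Qed.

Lemma hpoly_powX i n : hpoly (powE (EX i) n) n.
Proof.
  induction n as [|n IH]; [apply hpoly_C |].
  apply (hpoly_mul _ _ 1 n); [apply hpoly_X | exact IH | reflexivity].
Qed.

Lemma hpoly_sumE g n k : (forall i, (i <= n)%nat -> hpoly (g i) k) -> hpoly (sumE g n) k.
Proof.
  induction n as [|n IH]; intros Hg; simpl; [apply Hg; lia |].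
  apply hpoly_add; [apply IH; intros i Hi | ]; apply Hg; lia.
Qed.

Definition polyE (c : nat -> nat -> R) (k : nat) : expr :=
  sumE (fun i => sumE (fun j =>
    EMul (EMul (EMul (EC (c i j)) (powE (EX CA) i)) (powE (EX CB) j)) (powE (EX CW) (k - i - j)))
  (k - i)) k.

Lemma hpoly_polyE c k : hpoly (polyE c k) k.
Proof.
  apply hpoly_sumE. intros i Hi. apply hpoly_sumE. intros j Hj.
  apply (hpoly_mul _ _ (i + j) (k - i - j)); [| apply hpoly_powX | lia].
  apply (hpoly_mul _ _ i j); [| apply hpoly_powX | reflexivity].
  apply (hpoly_mul _ _ 0 i); [apply hpoly_C | apply hpoly_powX | reflexivity].
Qed.

Lemma ev_polyE c k a b w :
  ev (polyE c k) (a, b, w) =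
  sum_f_R0 (fun i => sum_f_R0 (fun j => c i j * a ^ i * b ^ j * w ^ (k - i - j)) (k - i)) k.
Proof.
  unfold polyE. rewrite ev_sumE. apply sum_eq. intros i _.
  rewrite ev_sumE. apply sum_eq. intros j _.
  simpl. rewrite !ev_powE. reflexivity.
Qed.

Theorem lemma3p7 (U : pt -> Prop) (k : nat) (f : pt -> R) (L : diff_op) :
  open U -> U origin ->
  hom_poly k f ->
  (forall u, W 1 U u -> W 1 U (apply_op L u)) ->
  exists u v' : pt -> R,
    W 1 U u /\ W 1 U v' /\
    forall p : pt, punct U p ->
      lap u p + apply_op L u p = f p / rw p ^ (k + 1) + v' p.
Proof.
  (* [u] is built on all of R^3 \ {0}. *)
  intros _ _ [c Hf] HL.
  destruct (lapX_preimage k (polyE c k) (hpoly_polyE c k)) as [E [Hord [Hlog HE]]].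
  assert (HW : W 1 U (ev E)) by (apply W1_ev; assumption).
  exists (ev E), (apply_op L (ev E)).
  split; [exact HW | split; [apply HL, HW |]].
  intros p [_ Hp]. rewrite lap_ev, HE by exact Hp. f_equal.
  rewrite Rpower_Ropp, <- (Rpower_pow (k + 1)) by (apply rw_pos, Hp).
  rewrite plus_INR. destruct p as [[a b] w]. rewrite ev_polyE, Hf. reflexivity.
Qed.
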